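(* There exists a routing game that is asymptotically well designed (i.e. belongs to AWDG) but is not gaugeable.
   Context: A non-atomic congestion game (NCG) consists of: a finite set $A$ of resources; an integer $K\ge 1$ of user groups; pairwise disjoint finite nonempty sets $\mathcal S_1,\dots,\mathcal S_K$ of strategies, $\mathcal S=\bigcup_{k}\mathcal S_k$ (strategies in $\mathcal S_k$ are available only to group $k$); constants $r(a,s)\ge 0$ ($a\in A$, $s\in\mathcal S$) with $\sum_{a\in A} r(a,s)>0$ for every $s$ and $\sum_{s\in\mathcal S} r(a,s)>0$ for every $a$; continuous nondecreasing consumption price functions $\tau_a:[0,\infty)\to[0,\infty)$; and a user volume vector $d=(d_k)_{k=1}^K\in\mathbb R_{\ge 0}^K$ with total volume $T(d)=\sum_k d_k$. The game structure is fixed while $d$ varies (over all of $\mathbb R^K_{\ge0}$ unless a set of admissible user volume vectors is specified, in which case every quantification over user volume vectors ranges over that set). A feasible profile for $d$ is $f=(f_s)_{s\in\mathcal S}$ with $f_s\ge 0$ and $\sum_{s\in\mathcal S_k} f_s=d_k$ for all $k$; its resource loads are $f_a=\sum_{s} r(a,s)f_s$, strategy prices $\tau_s(f)=\sum_{a} r(a,s)\tau_a(f_a)$, and social cost $C(f)=\sum_a f_a\tau_a(f_a)=\sum_s f_s\tau_s(f)$. $f$ is an NE-profile (Nash equilibrium) if for every $k$ and all $s,s'\in\mathcal S_k$ with $f_s>0$ we have $\tau_s(f)\le\tau_{s'}(f)$; it is an SO-profile if it minimizes $C$ among feasible profiles for $d$. All NE-profiles for a given $d$ have the same cost, as do all SO-profiles.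 The price of anarchy is $\mathrm{PoA}(d)=C(\tilde f)/C(f^* )$ for an NE-profile $\tilde f$ and an SO-profile $f^*$ for $d$ (when $C(f^* )>0$). The game is asymptotically well designed (in AWDG) if $\mathrm{PoA}(d^{(n)})\to 1$ for every sequence of user volume vectors with $T(d^{(n)})\to\infty$. A routing game is an NCG given by a directed graph $G=(V,A)$ whose arcs are the resources, $K$ origin–destination pairs $(o_k,t_k)$, $\mathcal S_k$ the set of directed $o_k$–$t_k$ paths in $G$, $r(a,s)=1$ if arc $a$ lies on path $s$ and $0$ otherwise, $\tau_a$ the travel time function of arc $a$, and $d_k$ the travel demand of pair $k$. A positive function $g$ is regularly varying if $\lim_{t\to\infty} g(tx)/g(t)$ exists and is finite and nonzero for every $x>0$. A routing game is gaugeable if: (G1) there is a regularly varying $g$ such that $c_a:=\lim_{x\to\infty}\tau_a(x)/g(x)\in[0,+\infty]$ exists for every $a\in A$; (G2) $r(a,s)$ is the indicator of $a\in s$; (G3) every group $k$ has a tight strategy, i.e. some $s\in\mathcal S_k$ with $c_s:=\max\{c_a: r(a,s)=1\}<\infty$; (G4) for every sequence of user volume vectors with $T\to\infty$, $\liminf T^{tight}/T>0$, where group $k$ is called tight if $\min_{s\in\mathcal S_k} c_s\in(0,\infty)$ and $T^{tight}=\sum_{k\text{ tight}} d_k$. *)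

From Stdlib Require Import Bool Reals Lra List Arith Classical ClassicalEpsilon.
Import ListNotations.
Open Scope R_scope.

(* Arcs of a directed graph are pairs (tail, head) of vertices (nat). *)
Definition arc := (nat * nat)%type.

Definition lsum {X : Type} (l : list X) (F : X -> R) : R :=
  fold_right (fun x acc => F x + acc) 0 l.

Fixpoint walk (A : list arc) (u t : nat) (p : list arc) : Prop :=
  match p with
  | nil => u = t
  | (x, y) :: q => x = u /\ In (x, y) A /\ walk A y t q
  end.

Definition simple_path (A : list arc) (o t : nat) (p : list arc) : Prop :=
  walk A o t p /\ NoDup (o :: map snd p).

Definition arc_on (a : arc) (p : list arc) : bool :=
  existsb (fun b => andb (Nat.eqb (fst a) (fst b)) (Nat.eqb (snd a) (snd b))) p.
Definition r (a : arc) (p : list arc) : R := if arc_on a p then 1 else 0.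

(* Strategies of group k are the pairs (k, p) with p an
   element of [paths k], which is required (in [rg_wf]) to enumerate without
   repetition exactly the directed orig k - dest k paths. *)
Record routing_game := {
  arcs : list arc;
  K : nat;
  orig : nat -> nat;
  dest : nat -> nat;
  paths : nat -> list (list arc);
  tau : arc -> R -> R
}.

Definition groups (G : routing_game) : list nat := seq 0 (K G).

Definition cont_on_nonneg (h : R -> R) : Prop :=
  forall x, 0 <= x -> forall eps, eps > 0 -> exists delta, delta > 0 /\
    forall y, 0 <= y -> Rabs (y - x) < delta -> Rabs (h y - h x) < eps.

Definition rg_wf (G : routing_game) : Prop :=
  NoDup (arcs G) /\
  (1 <= K G)%nat /\
  (forall k, (k < K G)%nat ->
     NoDup (paths G k) /\
     (forall p, In p (paths G k) <-> simple_path (arcs G) (orig G k) (dest G k) p)) /\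
  (forall k, (k < K G)%nat -> paths G k <> nil) /\
  (forall k p, (k < K G)%nat -> In p (paths G k) -> lsum (arcs G) (fun a => r a p) > 0) /\
  (forall a, In a (arcs G) ->
     lsum (groups G) (fun k => lsum (paths G k) (fun p => r a p)) > 0) /\
  (forall a, In a (arcs G) ->
     (forall x, 0 <= x -> 0 <= tau G a x) /\
     (forall x y, 0 <= x -> x <= y -> tau G a x <= tau G a y) /\
     cont_on_nonneg (tau G a)).

(* user volume vectors d : nat -> R (only d k, k < K, matter);
   flow profiles f : nat -> list arc -> R, f k p = flow of group k on path p *)
Definition volume_vector (G : routing_game) (d : nat -> R) : Prop :=
  forall k, (k < K G)%nat -> 0 <= d k.

Definition total (G : routing_game) (d : nat -> R) : R := lsum (groups G) d.

Definition feasible (G : routing_game) (d : nat -> R) (f : nat -> list arc -> R) : Prop :=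
  (forall k p, 0 <= f k p) /\
  (forall k, (k < K G)%nat -> lsum (paths G k) (f k) = d k).

Definition load (G : routing_game) (f : nat -> list arc -> R) (a : arc) : R :=
  lsum (groups G) (fun k => lsum (paths G k) (fun p => r a p * f k p)).

Definition strat_price (G : routing_game) (f : nat -> list arc -> R) (p : list arc) : R :=
  lsum (arcs G) (fun a => r a p * tau G a (load G f a)).

Definition cost (G : routing_game) (f : nat -> list arc -> R) : R :=
  lsum (arcs G) (fun a => load G f a * tau G a (load G f a)).

Definition is_NE (G : routing_game) (d : nat -> R) (f : nat -> list arc -> R) : Prop :=
  feasible G d f /\
  forall k p p', (k < K G)%nat -> In p (paths G k) -> In p' (paths G k) ->
    f k p > 0 -> strat_price G f p <= strat_price G f p'.

Definition is_SO (G : routing_game) (d : nat -> R) (f : nat -> list arc -> R) : Prop :=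
  feasible G d f /\ forall h, feasible G d h -> cost G f <= cost G h.

(* Asymptotically well designed: PoA(d^(n)) -> 1 whenever T(d^(n)) -> oo
   (PoA being defined, i.e. C(SO) > 0, for all large n). *)
Definition AWDG (G : routing_game) : Prop :=
  forall (d : nat -> nat -> R) (fne fso : nat -> nat -> list arc -> R),
    (forall n, volume_vector G (d n)) ->
    cv_infty (fun n => total G (d n)) ->
    (forall n, is_NE G (d n) (fne n)) ->
    (forall n, is_SO G (d n) (fso n)) ->
    (exists N, forall n, (N <= n)%nat -> cost G (fso n) > 0) /\
    Un_cv (fun n => cost G (fne n) / cost G (fso n)) 1.

Definition lim_at_infty (h : R -> R) (L : R) : Prop :=
  forall eps, eps > 0 -> exists M, forall t, t > M -> Rabs (h t - L) < eps.
Definition to_infty (h : R -> R) : Prop :=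
  forall B, exists M, forall t, t > M -> h t > B.

Definition regularly_varying (g : R -> R) : Prop :=
  (forall x, 0 < x -> 0 < g x) /\
  forall x, 0 < x -> exists L, L <> 0 /\ lim_at_infty (fun t => g (t * x) / g t) L.

(* extended nonnegative reals [0,+oo]: Some v = v, None = +oo *)
Definition ext_val (c : option R) : R := match c with Some v => v | None => 0 end.

(* c_s = max { c_a : a on s } (tight case: all c_a finite, nonnegative) *)
Definition tight_strategy (G : routing_game) (c : arc -> option R) (p : list arc) : Prop :=
  forall a, arc_on a p = true -> c a <> None.
Definition c_strat (c : arc -> option R) (p : list arc) : R :=
  fold_right (fun a m => Rmax (ext_val (c a)) m) 0 p.

(* group k tight: min_s c_s in (0,oo) *)
Definition tight_group (G : routing_game) (c : arc -> option R) (k : nat) : Prop :=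
  (exists p, In p (paths G k) /\ tight_strategy G c p) /\
  (forall p, In p (paths G k) -> tight_strategy G c p -> c_strat c p > 0).

Definition T_tight (G : routing_game) (c : arc -> option R) (d : nat -> R) : R :=
  lsum (groups G) (fun k =>
    if excluded_middle_informative (tight_group G c k) then d k else 0).

Definition gaugeable (G : routing_game) : Prop :=
  exists (g : R -> R) (c : arc -> option R),
    regularly_varying g /\
    (forall a, In a (arcs G) ->
       match c a with
       | Some v => lim_at_infty (fun x => tau G a x / g x) v
       | None => to_infty (fun x => tau G a x / g x)
       end) /\
    (* G2 holds by construction (r is the arc-path indicator) *)
    (forall k, (k < K G)%nat -> exists p, In p (paths G k) /\ tight_strategy G c p) /\
    (forall d : nat -> nat -> R,
       (forall n, volume_vector G (d n)) ->
       cv_infty (fun n => total G (d n)) ->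
       exists eps, eps > 0 /\ exists N, forall n, (N <= n)%nat ->
         eps <= T_tight G c (d n) / total G (d n)).

(* The witness is the single-link network whose only arc has travel time [exp].
   There is a single path, so every feasible profile is both a Nash equilibrium
   and a system optimum and the price of anarchy is identically 1.  Gaugeability
   fails because, as soon as the total demand grows, (G4) forces the unique group
   to be tight, i.e. [exp x / g x] tends to some [v > 0]; for a regularly varying
   [g] this bounds [exp (2 t) / exp t = exp t], which is absurd. *)

From Stdlib Require Import Reals Lra Lia List ClassicalEpsilon.
Import ListNotations.
Open Scope R_scope.

Lemma continuity_cont_on_nonneg (h : R -> R) : continuity h -> cont_on_nonneg h.
Proof.
  intros Hc x _ eps Heps.
  destruct (Hc x eps Heps) as [delta [Hdelta Hnear]].
  exists delta; split; [exact Hdelta |].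
  intros y _ Hy.
  destruct (Req_dec y x) as [-> | Hyx].
  - rewrite Rminus_diag, Rabs_R0; exact Heps.
  - apply (Hnear y); split; [split; [exact I | auto] | exact Hy].
Qed.

Definition unbounded_doubling (h : R -> R) : Prop :=
  forall B M, exists t, t > M /\ B * h t < h (t * 2).

Lemma exp_unbounded_doubling : unbounded_doubling exp.
Proof.
  intros B M.
  set (t := Rmax M B + 1).
  assert (HM : M < t) by (pose proof (Rmax_l M B); unfold t; lra).
  assert (HB : B < exp t).
  { pose proof (Rmax_r M B); pose proof (exp_ineq1_le t); unfold t in *; lra. }
  exists t; split; [lra |].
  replace (t * 2) with (t + t) by ring.
  rewrite exp_plus.
  apply Rmult_lt_compat_r; [apply exp_pos | exact HB].
Qed.

Lemma asymptotic_doubling_bounded (g h : R -> R) (L v : R) :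
  (forall x, 0 < x -> 0 < g x) ->
  lim_at_infty (fun t => g (t * 2) / g t) L ->
  v > 0 ->
  lim_at_infty (fun x => h x / g x) v ->
  exists B M, forall t, t > M -> h (t * 2) <= B * h t.
Proof.
  intros Hgpos HL Hv Hhg.
  destruct (Hhg (v / 2) ltac:(lra)) as [M1 H1].
  destruct (HL 1 ltac:(lra)) as [M2 H2].
  set (C := Rabs L + 1).
  exists (3 * C), (Rmax (Rmax M1 M2) 0).
  intros t Ht.
  pose proof (Rmax_l (Rmax M1 M2) 0); pose proof (Rmax_r (Rmax M1 M2) 0).
  pose proof (Rmax_l M1 M2); pose proof (Rmax_r M1 M2).
  assert (Hg1 := Hgpos t ltac:(lra)).
  assert (Hg2 := Hgpos (t * 2) ltac:(lra)).
  assert (Hq1 := H1 t ltac:(lra)).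
  assert (Hq2 := H1 (t * 2) ltac:(lra)).
  assert (Hq3 := H2 t ltac:(lra)).
  apply Rabs_def2 in Hq1, Hq2, Hq3.
  pose proof (Rle_abs L).
  set (q1 := h t / g t) in *; set (q2 := h (t * 2) / g (t * 2)) in *;
    set (q3 := g (t * 2) / g t) in *.
  assert (E1 : h t = q1 * g t) by (unfold q1; field; lra).
  assert (E2 : h (t * 2) = q2 * g (t * 2)) by (unfold q2; field; lra).
  assert (E3 : g (t * 2) = q3 * g t) by (unfold q3; field; lra).
  assert (Hq3pos : 0 < q3) by (unfold q3; apply Rdiv_lt_0_compat; lra).
  (* [h (2 t) / h t = q2 q3 / q1] with [q1 > v/2], [q2 < 3v/2] and [0 < q3 < C]. *)
  rewrite E2, E3, E1.
  assert (q2 * q3 <= 3 * C * q1) by (unfold C in *; nra).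
  nra.
Qed.

Lemma regularly_varying_not_equivalent (g h : R -> R) (v : R) :
  regularly_varying g -> unbounded_doubling h -> v > 0 ->
  ~ lim_at_infty (fun x => h x / g x) v.
Proof.
  intros [Hgpos Hratio] Hunb Hv Hhg.
  destruct (Hratio 2 ltac:(lra)) as [L [_ HL]].
  destruct (asymptotic_doubling_bounded g h L v Hgpos HL Hv Hhg) as [B [M HB]].
  destruct (Hunb B M) as [t [Ht Hlt]].
  specialize (HB t Ht); lra.
Qed.

Definition link : arc := (0%nat, 1%nat).

Definition one_link (price : R -> R) : routing_game := {|
  arcs := [link];
  K := 1;
  orig := fun _ => 0%nat;
  dest := fun _ => 1%nat;
  paths := fun _ => [[link]];
  tau := fun _ => price |}.

Lemma one_link_simple_path (p : list arc) :
  simple_path [link] 0 1 p <-> p = [link].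
Proof.
  split.
  - intros [Hw _].
    destruct p as [| [x y] q]; simpl in Hw; [lia |].
    destruct Hw as [-> [[E | []] Hw]]; inversion E; subst.
    destruct q as [| [x' y'] q']; [reflexivity |].
    simpl in Hw; destruct Hw as [-> [[E' | []] _]]; inversion E'.
  - intros ->; split; simpl; [tauto |].
    repeat constructor; simpl; intuition lia.
Qed.

Lemma one_link_wf (price : R -> R) :
  (forall x, 0 <= x -> 0 <= price x) ->
  (forall x y, 0 <= x -> x <= y -> price x <= price y) ->
  cont_on_nonneg price ->
  rg_wf (one_link price).
Proof.
  intros Hnonneg Hmono Hcont.
  unfold rg_wf; simpl.
  split; [repeat constructor; simpl; tauto |].
  split; [lia |].
  split.
  { intros k _; split; [repeat constructor; simpl; tauto |].
    intros p; rewrite one_link_simple_path; simpl; intuition congruence. }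
  split; [intros k _; discriminate |].
  split; [intros k p _ [<- | []]; unfold lsum, r; simpl; lra |].
  split; [intros a [<- | []]; unfold lsum, groups, r; simpl; lra |].
  auto.
Qed.

Lemma total_one_link (price : R -> R) (d : nat -> R) :
  total (one_link price) d = d 0%nat.
Proof. unfold total, lsum; simpl; ring. Qed.

Lemma cost_one_link_feasible (price : R -> R) (d : nat -> R) f :
  feasible (one_link price) d f -> cost (one_link price) f = d 0%nat * price (d 0%nat).
Proof.
  intros [_ Hd].
  specialize (Hd 0%nat ltac:(simpl; lia)).
  unfold lsum in Hd; simpl in Hd; rewrite Rplus_0_r in Hd.
  unfold cost, load, lsum, r; simpl.
  rewrite Rmult_1_l, !Rplus_0_r, Hd; reflexivity.
Qed.

Lemma one_link_AWDG (price : R -> R) :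
  (forall x, 0 < x -> 0 < price x) -> AWDG (one_link price).
Proof.
  intros Hpos d fne fso _ Hinf Hne Hso.
  destruct (Hinf 0) as [N HN].
  assert (Hso_pos : forall n, (n >= N)%nat -> cost (one_link price) (fso n) > 0).
  { intros n Hn.
    specialize (HN n Hn); rewrite total_one_link in HN.
    rewrite (cost_one_link_feasible _ _ _ (proj1 (Hso n))).
    apply Rmult_lt_0_compat; [lra | apply Hpos; lra]. }
  split; [exists N; intros n Hn; apply Hso_pos; lia |].
  intros eps Heps; exists N; intros n Hn.
  rewrite (cost_one_link_feasible _ _ _ (proj1 (Hne n))),
    <- (cost_one_link_feasible _ _ _ (proj1 (Hso n))).
  unfold Rdist; rewrite Rdiv_diag by (specialize (Hso_pos n Hn); lra).
  rewrite Rminus_diag, Rabs_R0; exact Heps.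
Qed.

Lemma one_link_tight_equivalent (price : R -> R) (g : R -> R) (c : arc -> option R) :
  (forall a, In a [link] ->
     match c a with
     | Some v => lim_at_infty (fun x => price x / g x) v
     | None => to_infty (fun x => price x / g x)
     end) ->
  tight_group (one_link price) c 0 ->
  exists v, v > 0 /\ lim_at_infty (fun x => price x / g x) v.
Proof.
  intros Hlim [[p [Hp Htight]] Hc].
  specialize (Hc p Hp Htight).
  destruct Hp as [<- | []].
  specialize (Htight link eq_refl).
  specialize (Hlim link (or_introl eq_refl)).
  unfold c_strat in Hc; simpl in Hc.
  destruct (c link) as [v |]; [| congruence].
  exists v; split; [| exact Hlim].
  simpl in Hc; unfold Rmax in Hc; destruct (Rle_dec v 0); lra.
Qed.

Lemma one_link_not_gaugeable (price : R -> R) :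
  unbounded_doubling price -> ~ gaugeable (one_link price).
Proof.
  intros Hunb [g [c [Hg [Hlim [_ HG4]]]]].
  destruct (HG4 (fun n _ => INR n)) as [eps [Heps [N HN]]].
  - intros n k _; apply pos_INR.
  - intros M.
    destruct (INR_archimed 1 M ltac:(lra)) as [N HN].
    exists N; intros n Hn; rewrite total_one_link.
    apply le_INR in Hn; lra.
  - specialize (HN (S N) ltac:(lia)).
    assert (HSN : INR (S N) > 0) by (apply lt_0_INR; lia).
    unfold T_tight, lsum in HN; simpl in HN; rewrite total_one_link in HN.
    destruct (excluded_middle_informative (tight_group (one_link price) c 0)) as [Ht | _].
    + destruct (one_link_tight_equivalent price g c Hlim Ht) as [v [Hv Hv_lim]].
      exact (regularly_varying_not_equivalent g price v Hg Hunb Hv Hv_lim).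
    + rewrite Rplus_0_r, Rdiv_0_l in HN; lra.
Qed.

Theorem theorem1 :
  exists G : routing_game, rg_wf G /\ AWDG G /\ ~ gaugeable G.
Proof.
  exists (one_link exp); split; [| split].
  - apply one_link_wf.
    + intros x _; left; apply exp_pos.
    + intros x y _ Hxy; destruct Hxy as [Hlt | ->]; [left; apply exp_increasing |]; lra.
    + apply continuity_cont_on_nonneg, derivable_continuous, derivable_exp.
  - apply one_link_AWDG; intros x _; apply exp_pos.
  - apply one_link_not_gaugeable, exp_unbounded_doubling.
Qed.
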